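(* Let $G^c$ be a connected vertex-coloured graph with $n$ vertices, $c$ colours and minimum degree $\delta\ge 9$. Then either $\gamma^t(G^c)=c$ or $\gamma^t(G^c)<\frac{\delta(n-c+1)}{3\delta-1}+c-1$.
   Context: A vertex-coloured graph $G^c$ with colour set $\{1,\dots,c\}$ is a finite simple graph in which every vertex receives exactly one colour and every colour appears on at least one vertex. A dominating set is tropical if every colour appears on at least one of its vertices; $\gamma^t(G^c)$ is the minimum size of a tropical dominating set. *)

From HB Require Import structures.
From mathcomp Require Import all_boot all_order all_algebra.
Set Implicit Arguments. Unset Strict Implicit. Unset Printing Implicit Defensive.

Definition simple_graph (T : finType) (e : rel T) : Prop :=
  symmetric e /\ irreflexive e.

Definition connected_graph (T : finType) (e : rel T) : Prop :=
  forall x y : T, connect e x y.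

Definition nbhd (T : finType) (e : rel T) (x : T) : {set T} := [set y | e x y].
Definition deg (T : finType) (e : rel T) (x : T) : nat := #|nbhd e x|.

(* minimum degree (the graph is nonempty in our setting; value #|T| if empty) *)
Definition min_deg (T : finType) (e : rel T) : nat :=
  \big[minn/#|T|]_(x : T) deg e x.

Definition dominating (T : finType) (e : rel T) (D : {set T}) : bool :=
  [forall x, (x \in D) || [exists y in D, e x y]].

Definition surjective_colouring (T : finType) (c : nat) (col : T -> 'I_c) : Prop :=
  forall k : 'I_c, exists x : T, col x = k.

Definition tropical (T : finType) (c : nat) (col : T -> 'I_c) (D : {set T}) : bool :=
  [forall k : 'I_c, [exists x in D, col x == k]].

Definition tropical_dominating (T : finType) (e : rel T) (c : nat)
  (col : T -> 'I_c) (D : {set T}) : bool :=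
  dominating e D && tropical col D.

(* tropical domination number: minimum size of a tropical dominating set
   (the whole vertex set is one when the colouring is surjective) *)
Definition gamma_t (T : finType) (e : rel T) (c : nat) (col : T -> 'I_c) : nat :=
  \big[minn/#|T|]_(D : {set T} | tropical_dominating e col D) #|D|.

From HB Require Import structures.
From mathcomp Require Import all_boot all_order all_algebra.
From mathcomp Require Import ring lra zify.
Import Order.TTheory GRing.Theory Num.Theory.

Set Implicit Arguments.
Unset Strict Implicit.
Unset Printing Implicit Defensive.

(* Pick one vertex of each colour; call this set R.  If R dominates, it is a
   minimum tropical dominating set.  Otherwise the closed neighbourhood of every
   vertex not dominated by R has at least delta + 1 >= 10 vertices, all outside
   R; let N >= 10 be the number of vertices outside R.  Averaging over the
   k-subsets S of the complement of R, with k = N/4, some S leaves at most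
   N * C(N - 10, k) / C(N, k) of these vertices undominated; adding them to
   R and S gives a tropical dominating set of size at most c + (N - 2) / 3,
   which is below the claimed bound. *)

Lemma bin_sub_ffact n k t : 'C(n - t, k) * n ^_ t = 'C(n, k) * (n - k) ^_ t.
Proof.
elim: t => [|t IHt]; first by rewrite !subn0.
rewrite !ffactnSr subnS [n ^_ t * _]mulnC mulnA [_ * (n - t)]mulnC mul_bin_down.
by rewrite -mulnA mulnC IHt -mulnA subnAC.
Qed.

Lemma ffact10E a :
  (a + 9) ^_ 10 = (a + 9) * (a + 8) * (a + 7) * (a + 6) * (a + 5) * (a + 4)
                  * (a + 3) * (a + 2) * (a + 1) * a.
Proof. by rewrite ffactE /= !addnS addn0 muln1 !mulnA. Qed.

Lemma leq_of_add_eq d m n : m + d = n -> m <= n.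
Proof. by move<-; apply: leq_addr. Qed.

Lemma ffact10_quarter j r : r < 4 ->
  3 * (4 * j + r + 12) * (3 * j + r + 9) ^_ 10
    <= (j + r + 1) * (4 * j + r + 12) ^_ 10.
Proof.
have -> : 4 * j + r + 12 = 4 * j + r + 3 + 9 by rewrite -[RHS]addnA.
rewrite !ffact10E.
(* In each case the difference of the two sides is the given polynomial in j,
   whose coefficients are all nonnegative. *)
case: r => [|[|[|[|//]]]] _.
- apply: (@leq_of_add_eq (239500800 + 1736190720 * j + 5511390912 * j ^ 2
    + 10104772848 * j ^ 3 + 11891179280 * j ^ 4 + 9438550340 * j ^ 5
    + 5162807496 * j ^ 6 + 1949095164 * j ^ 7 + 498577920 * j ^ 8
    + 82462140 * j ^ 9 + 7954792 * j ^ 10 + 339988 * j ^ 11)); ring.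
- apply: (@leq_of_add_eq (1934150400 + 10932812640 * j + 27368416296 * j ^ 2
    + 40057605748 * j ^ 3 + 38104022850 * j ^ 4 + 24749780645 * j ^ 5
    + 11210725953 * j ^ 6 + 3545187414 * j ^ 7 + 768114000 * j ^ 8
    + 108788765 * j ^ 9 + 9085701 * j ^ 10 + 339988 * j ^ 11)); ring.
- apply: (@leq_of_add_eq (9220780800 + 43916523840 * j + 93194202960 * j ^ 2
    + 116351476968 * j ^ 3 + 95001076900 * j ^ 4 + 53295502010 * j ^ 5
    + 20976289530 * j ^ 6 + 5797021944 * j ^ 7 + 1103545200 * j ^ 8
    + 137989650 * j ^ 9 + 10216610 * j ^ 10 + 339988 * j ^ 11)); ring.
- apply: (@leq_of_add_eq (32811609600 + 136628164800 * j + 254642389344 * j ^ 2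
    + 280483299588 * j ^ 3 + 202942021820 * j ^ 4 + 101313762755 * j ^ 5
    + 35622907887 * j ^ 6 + 8825046474 * j ^ 7 + 1510152630 * j ^ 8
    + 170064795 * j ^ 9 + 11347519 * j ^ 10 + 339988 * j ^ 11)); ring.
Qed.

Lemma ffact10_quarter_div n :
  3 * n * (n - n %/ 4) ^_ 10 <= (n - 2 - 3 * (n %/ 4)) * n ^_ 10.
Proof.
set k := n %/ 4.
have [small|large] := ltnP (n - k) 10; first by rewrite ffact_small ?muln0.
have n_eq := divn_eq n 4; have r_lt4 := ltn_pmod n (isT : 0 < 4).
set r := n %% 4 in n_eq r_lt4.
have [j k_eq] : exists j, k = j + 3 by exists (k - 3); lia.
have -> : n - k = 3 * j + r + 9 by lia.
have -> : n - 2 - 3 * k = j + r + 1 by lia.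
have -> : n = 4 * j + r + 12 by lia.
exact: ffact10_quarter.
Qed.

Lemma quarter_sample_bound n x : 10 <= n ->
  x * 'C(n, n %/ 4) <= n * 'C(n - 10, n %/ 4) -> 3 * (n %/ 4 + x) <= n - 2.
Proof.
set k := n %/ 4 => n_ge10 x_le.
have k_le : k * 4 <= n := leq_divM n 4.
have C_gt0 : 0 < 'C(n, k) by rewrite bin_gt0 leq_div.
have F_gt0 : 0 < n ^_ 10 by rewrite ffact_gt0.
have CF_gt0 : 0 < 'C(n, k) * n ^_ 10 by rewrite muln_gt0 C_gt0.
have lhs_le :
    3 * x * ('C(n, k) * n ^_ 10) <= 3 * n * ('C(n, k) * (n - k) ^_ 10).
  rewrite -bin_sub_ffact -!mulnA leq_pmul2l // [x * _]mulnA [n * _]mulnA.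
  by rewrite leq_pmul2r.
have rhs_le :
    3 * n * ('C(n, k) * (n - k) ^_ 10) <= (n - 2 - 3 * k) * ('C(n, k) * n ^_ 10).
  by rewrite mulnCA [X in _ <= X]mulnCA leq_pmul2l // ffact10_quarter_div.
have := leq_trans lhs_le rhs_le; rewrite leq_pmul2r //; lia.
Qed.

Lemma ltr_domination_bound (g c n d : nat) :
  c <= n -> 3 * g + 2 <= 2 * c + n -> 0 < d ->
  (g%:R < d%:R * (n%:R - c%:R + 1) / (3 * d%:R - 1) + c%:R - 1 :> rat)%R.
Proof.
rewrite -!(ler_nat rat) !(natrD, natrM) => c_le g_le d_ge1.
have D_gt0 : (0 < 3 * d%:R - 1 :> rat)%R by lra.
have -> : (d%:R * (n%:R - c%:R + 1) / (3 * d%:R - 1)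
          = (n%:R - c%:R + 1) / 3 + (n%:R - c%:R + 1) / (3 * (3 * d%:R - 1)) :> rat)%R.
  by field; rewrite gt_eqF.
suff : (0 < (n%:R - c%:R + 1) / (3 * (3 * d%:R - 1)) :> rat)%R by lra.
by apply: divr_gt0; lra.
Qed.

Lemma sum_nat_pred (I : finType) (A : {set I}) (P : pred I) :
  \sum_(x in A) P x = #|[set x in A | P x]|.
Proof.
rewrite -sum1_card big_mkcond [RHS]big_mkcond /=.
by apply: eq_bigr => x _; rewrite inE; case: (x \in A); case: (P x).
Qed.

Lemma exists_mul_card_le_sum (I : finType) (A : {set I}) (f : I -> nat) :
  A != set0 -> exists2 x, x \in A & f x * #|A| <= \sum_(y in A) f y.
Proof.
case/set0Pn=> x0 x0A; have [x xA xmin] := arg_minnP f x0A; exists x => //.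
by rewrite mulnC -sum_nat_const leq_sum.
Qed.

Definition ksubsets (T : finType) (W : {set T}) (k : nat) : {set {set T}} :=
  [set S : {set T} | S \subset W & #|S| == k].

Lemma card_ksubsets (T : finType) (W : {set T}) k : #|ksubsets W k| = 'C(#|W|, k).
Proof. exact: cards_draws. Qed.

Section Domination.
Variables (T : finType) (e : rel T).

Definition closed_nbhd (x : T) : {set T} := x |: nbhd e x.

Definition dominated_by (S : {set T}) : {set T} :=
  [set x | (x \in S) || [exists y in S, e x y]].

Lemma dominatingP (D : {set T}) :
  reflect (forall x, x \in dominated_by D) (dominating e D).
Proof. by apply: (iffP forallP) => dom x; have := dom x; rewrite inE. Qed.

Lemma dominated_byS (A B : {set T}) :
  A \subset B -> dominated_by A \subset dominated_by B.
Proof.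
move=> /subsetP AB; apply/subsetP => x; rewrite !inE => /orP[/AB -> //|].
case/existsP=> y /andP[/AB yB exy].
by apply/orP; right; apply/existsP; exists y; rewrite yB.
Qed.

Lemma undominatedE (S : {set T}) x :
  (x \notin dominated_by S) = [disjoint closed_nbhd x & S].
Proof.
rewrite inE negb_or disjoints_subset; apply/andP/subsetP => [[xS /existsPn nS] y|sub].
  by rewrite !inE => /predU1P[-> // | exy]; have := nS y; rewrite exy andbT.
have nbhd_notin y : y \in closed_nbhd x -> y \notin S by move/sub; rewrite inE.
split; first exact/nbhd_notin/setU11.
apply/existsPn => y; apply/negP => /andP[yS exy].
by have := nbhd_notin y; rewrite yS !inE exy orbT => /(_ isT).
Qed.

Lemma subset_dominated_by (S : {set T}) : S \subset dominated_by S.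
Proof. by apply/subsetP => x xS; rewrite inE xS. Qed.

Lemma dominating_setU_undominated (A : {set T}) :
  dominating e (A :|: ~: dominated_by A).
Proof.
apply/dominatingP => x; case: (boolP (x \in dominated_by A)) => [xdA|xndA].
  exact: subsetP (dominated_byS (subsetUl _ _)) x xdA.
by rewrite inE !in_setU in_setC xndA orbT.
Qed.

Lemma min_deg_lt_card_closed_nbhd x : irreflexive e -> min_deg e < #|closed_nbhd x|.
Proof. by move=> irr; rewrite cardsU1 inE irr ltnS; apply: (@bigmin_le_cond _ nat). Qed.

Variables (W U : {set T}) (m k : nat).
Hypothesis nbhdW : forall u, u \in U -> closed_nbhd u \subset W.
Hypothesis card_nbhd : forall u, u \in U -> m <= #|closed_nbhd u|.

Lemma sum_card_undominated :
  \sum_(S in ksubsets W k) #|U :\: dominated_by S| <= #|U| * 'C(#|W| - m, k).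
Proof.
have cardE S : #|U :\: dominated_by S| = \sum_(u in U) (u \notin dominated_by S).
  by rewrite sum_nat_pred; apply: eq_card => x; rewrite !inE andbC.
under eq_bigr => S _ do rewrite cardE.
rewrite exchange_big /= -sum_nat_const leq_sum // => u uU; rewrite sum_nat_pred.
apply: (@leq_trans #|ksubsets (W :\: closed_nbhd u) k|).
  apply/subset_leq_card/subsetP => S /setIdP[]; rewrite inE => /andP[SW /eqP <-].
  rewrite undominatedE disjoint_sym disjoints_subset => Ssub.
  by rewrite inE eqxx andbT setDE subsetI SW.
rewrite card_ksubsets leq_bin2l // cardsD (setIidPr (nbhdW uU)).
exact: leq_sub2l (card_nbhd uU).
Qed.

Lemma exists_ksubset_few_undominated : k <= #|W| ->
  exists2 S, S \in ksubsets W k &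
    #|U :\: dominated_by S| * 'C(#|W|, k) <= #|U| * 'C(#|W| - m, k).
Proof.
move=> k_le; have ksubsets_n0 : ksubsets W k != set0.
  by rewrite -card_gt0 card_ksubsets bin_gt0.
have [S Sk S_le] :=
  exists_mul_card_le_sum (fun S => #|U :\: dominated_by S|) ksubsets_n0.
by exists S; rewrite // -card_ksubsets (leq_trans S_le) ?sum_card_undominated.
Qed.

End Domination.

Section Tropical.
Variables (T : finType) (c : nat) (col : T -> 'I_c).

Lemma tropical_card (D : {set T}) : tropical col D -> c <= #|D|.
Proof.
move=> /forallP tropD; rewrite -[c]card_ord -cardsT.
apply: leq_trans (leq_imset_card col D); apply/subset_leq_card/subsetP => k _.
by have /existsP[x /andP[xD /eqP <-]] := tropD k; apply: imset_f.
Qed.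

Lemma tropicalS (A B : {set T}) : A \subset B -> tropical col A -> tropical col B.
Proof.
move=> /subsetP AB /forallP tropA; apply/forallP => k.
by have /existsP[x /andP[/AB xB colx]] := tropA k; apply/existsP; exists x; rewrite xB.
Qed.

Lemma exists_tropical_transversal : surjective_colouring col ->
  exists2 R : {set T}, tropical col R & #|R| = c.
Proof.
move=> /fin_all_exists[rep colK]; exists (rep @: setT).
  by apply/forallP => k; apply/existsP; exists (rep k); rewrite imset_f // colK eqxx.
by rewrite card_imset ?cardsT ?card_ord //; apply: can_inj colK.
Qed.

Variable e : rel T.

Lemma gamma_t_le (D : {set T}) :
  tropical_dominating e col D -> gamma_t e col <= #|D|.
Proof. exact: (@bigmin_le_cond _ nat). Qed.

Lemma gamma_t_le_completion (R S : {set T}) : tropical col R ->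
  gamma_t e col <= #|R| + #|S| + #|~: dominated_by e R :\: dominated_by e S|.
Proof.
move=> tropR; set A := R :|: S.
have tdA : tropical_dominating e col (A :|: ~: dominated_by e A).
  rewrite /tropical_dominating dominating_setU_undominated.
  by rewrite (tropicalS _ tropR) // -setUA subsetUl.
apply: leq_trans (gamma_t_le tdA) (leq_trans (leq_card_setU _ _).1 _).
rewrite leq_add ?(leq_card_setU _ _).1 // subset_leq_card //.
by rewrite setDE -setCU setCS subUset !dominated_byS ?subsetUl ?subsetUr.
Qed.

Lemma gamma_t_ge : surjective_colouring col -> c <= gamma_t e col.
Proof.
move=> surj; apply: (@le_bigmin _ nat) => [|D /andP[_]]; last exact: tropical_card.
by have [R _ <-] := exists_tropical_transversal surj; apply: max_card.
Qed.

End Tropical.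

Theorem mainTheorem6 (T : finType) (e : rel T) (c : nat) (col : T -> 'I_c) :
  simple_graph e -> connected_graph e -> surjective_colouring col ->
  9 <= min_deg e ->
  gamma_t e col = c \/
  ((gamma_t e col)%:R <
     ((min_deg e)%:R * ((#|T|)%:R - c%:R + 1)) / (3 * (min_deg e)%:R - 1)
     + c%:R - 1 :> rat)%R.
Proof.
move=> [_ irr] _ surj d_ge9.
have [R tropR cardR] := exists_tropical_transversal surj.
have gamma_le S := gamma_t_le_completion e S tropR; rewrite cardR in gamma_le.
have [domR|/set0Pn[u0 u0U]] := eqVneq (~: dominated_by e R) set0.
  left; apply/eqP; rewrite eqn_leq gamma_t_ge // andbT.
  by have := gamma_le set0; rewrite domR set0D cards0 !addn0.
right; set U := ~: dominated_by e R; set n := #|~: R|.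
have nbhdW u : u \in U -> closed_nbhd e u \subset ~: R.
  by rewrite inE undominatedE disjoints_subset.
have nbhd_ge u : 10 <= #|closed_nbhd e u|.
  exact: leq_ltn_trans d_ge9 (min_deg_lt_card_closed_nbhd u irr).
have n_ge10 : 10 <= n := leq_trans (nbhd_ge u0) (subset_leq_card (nbhdW u0 u0U)).
have U_le : #|U| <= n by rewrite subset_leq_card // setCS subset_dominated_by.
have [S /setIdP[_ /eqP cardS] undom_le] :=
  exists_ksubset_few_undominated nbhdW (fun u _ => nbhd_ge u) (leq_div n 4).
have key := quarter_sample_bound n_ge10 (leq_trans undom_le (leq_mul U_le (leqnn _))).
apply: ltr_domination_bound; first by rewrite -cardR max_card.
  by rewrite -(cardsC R) cardR; have := gamma_le S; rewrite cardS -/U -/n; lia.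
exact: leq_trans d_ge9.
Qed.
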